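(* Let $G=(V,E)$ be a graph, $v\in V$, $d\ge 1$ an embedding dimension, $\alpha\in(0,1)$ the PageRank decay factor and $\epsilon>0$ the PPR precision. The algorithm $\textsc{InstantEmbedding}(v,G,d,\epsilon)$ (described in the context) has running time $O\!\left(d + \frac{1}{\alpha(1-\alpha)\epsilon}\right)$; in particular it is independent of the number of nodes $n$ and edges $m$ of $G$.
   Context: $G=(V,E)$ is an unweighted graph with $n=|V|$ nodes, $m=|E|$ edges, adjacency matrix $\mathbf{A}$ and diagonal degree matrix $\mathbf{D}$; $\deg(u)$ denotes the degree of $u$; the graph is accessed via adjacency-list queries and hash functions are evaluated in constant time. For a starting distribution $\mathbf{s}$ and decay factor $\alpha\in(0,1)$, the Personalized PageRank vector $\pi(\mathbf{s})$ is defined by $\pi(\mathbf{s}) = \alpha\mathbf{s} + (1-\alpha)\pi(\mathbf{s})^\top\mathbf{D}^{-1}\mathbf{A}$; $\pi_v=\pi(\mathbf{e}_v)$. $\mathrm{SparsePPR}(v,G,\epsilon)$ is the local push approximation of Andersen, Chung and Lang (2007): start with $p=\mathbf{0}$, residual $r=\mathbf{e}_v$; while there is a node $u$ with $r_u \ge \epsilon\deg(u)$, perform a push at $u$: $p_u \mathrel{+}= \alpha r_u$, distribute the remaining residual mass $(1-\alpha)r_u$ of $u$ (in the lazy variant, half kept at $u$ and half spread equally over the neighbors of $u$), and update $r$ accordingly; finally return the sparse vector $p$ listing its nonzero entries. Let $h_d:\mathbb{N}\to\{0,\dots,d-1\}$ and $h_{\mathrm{sgn}}:\mathbb{N}\to\{-1,1\}$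 be hash functions drawn from universal hash families. $\textsc{InstantEmbedding}(v,G,d,\epsilon)$: compute $\pi_v \leftarrow \mathrm{SparsePPR}(v,G,\epsilon)$; set $\mathbf{w}\leftarrow\mathbf{0}_d$; for each nonzero entry $r_j$ of $\pi_v$ (indexed by node $j$), do $\mathbf{w}_{h_d(j)} \mathrel{+}= h_{\mathrm{sgn}}(j)\cdot\max(\log(r_j n),0)$; return $\mathbf{w}$. *)

From HB Require Import structures.
From mathcomp Require Import all_boot all_order all_algebra.
From mathcomp Require Import reals exp.
Set Implicit Arguments. Unset Strict Implicit. Unset Printing Implicit Defensive.
Import Order.TTheory GRing.Theory Num.Theory.
Local Open Scope ring_scope.

Section PPR.
Variables (R : realType) (T : finType) (adj : rel T).

Definition deg (u : T) : nat := #|[set w | adj u w]|.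

(* State of the push algorithm: (p, r). *)
Definition state := ({ffun T -> R} * {ffun T -> R})%type.

Definition init_state (v : T) : state :=
  ([ffun _ => 0], [ffun w => (w == v)%:R]).

Definition pushable (eps : R) (s : state) (u : T) : bool :=
  eps * (deg u)%:R <= s.2 u.

Definition push (lazy : bool) (alpha : R) (u : T) (s : state) : state :=
  let ru := s.2 u in
  ([ffun w => s.1 w + (if w == u then alpha * ru else 0)],
   [ffun w => (if w == u then (if lazy then (1 - alpha) * ru / 2 else 0) else s.2 w)
              + (if adj u w then
                   (if lazy then (1 - alpha) * ru / (2 * (deg u)%:R)
                    else (1 - alpha) * ru / (deg u)%:R)
                 else 0)]).

(* Executing a (nondeterministically chosen) sequence of push nodes;
   None if some push in the sequence is not allowed. *)
Fixpoint run (lazy : bool) (alpha eps : R) (s : state) (us : seq T) : option state :=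
  match us with
  | [::] => Some s
  | u :: us' => if pushable eps s u then run lazy alpha eps (push lazy alpha u s) us'
                else None
  end.

(* The while loop has stopped: no node satisfies the push condition. *)
Definition complete (eps : R) (s : state) : Prop := forall u, ~~ pushable eps s u.

(* Cost model (unit-cost RAM, adjacency-list access, O(1) hashing):
   1 unit of initialisation, and 1 + deg(u) units for a push at u
   (update p_u, r_u, and the residual of each neighbour, including the
   O(1) bookkeeping of the queue of pushable nodes). *)
Definition sparse_ppr_cost (us : seq T) : nat := (1 + \sum_(u <- us) (1 + deg u))%N.

Definition support (p : {ffun T -> R}) : {set T} := [set j | p j != 0].

(* InstantEmbedding cost: SparsePPR, then d units to create w = 0_d, then
   O(1) per nonzero entry of pi_v (two hash evaluations, a log, an update). *)
Definition instant_embedding_cost (d : nat) (us : seq T) (p : {ffun T -> R}) : nat :=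
  (sparse_ppr_cost us + d + #|support p|)%N.

(* The output vector of InstantEmbedding (for documentation; the running
   time statement does not depend on it). *)
Definition instant_embedding_output (d : nat) (hd : T -> 'I_d) (hsgn : T -> bool)
    (p : {ffun T -> R}) : {ffun 'I_d -> R} :=
  [ffun i => \sum_(j in support p | hd j == i)
      (if hsgn j then 1 else -1) * Num.max (ln (p j * (#|T|)%:R)) 0].

End PPR.

(* Each push at u moves alpha r_u >= alpha eps deg(u) of residual mass into p
   and conserves the rest, so the residual mass, which starts at 1 and stays
   nonnegative, bounds the total degree D of the pushed nodes by 1/(alpha eps).
   A push at u costs 1 + deg(u) and adds at most one entry to the support of p,
   so InstantEmbedding costs at most 1 + 3D + d; the same mass argument shows
   that a greedy sequence of pushes terminates. *)
From Pilot Require Import Defs.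
From HB Require Import structures.
From mathcomp Require Import all_boot all_order all_algebra.
From mathcomp Require Import reals.
From mathcomp Require Import ring lra zify.
Set Implicit Arguments. Unset Strict Implicit. Unset Printing Implicit Defensive.
Import Order.TTheory GRing.Theory Num.Theory.
Local Open Scope ring_scope.

Section PushAnalysis.
Variables (R : realType) (T : finType) (adj : rel T).
Variables (lazy : bool) (alpha eps : R).

Notation mass s := (\sum_w (s : state R T).2 w).
Notation nonneg_residual s := (forall w, 0 <= (s : state R T).2 w).

Lemma sum_adj_const (u : T) (c : R) :
  \sum_w (if adj u w then c else 0) = c * (deg adj u)%:R.
Proof.
rewrite -big_mkcond /= (eq_bigl (mem [set w | adj u w])) => [|w].
  by rewrite sumr_const mulr_natr.
by rewrite /= inE.
Qed.

Lemma push_residual_sum (u : T) (s : state R T) : (0 < deg adj u)%N ->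
  mass (push adj lazy alpha u s) = mass s - alpha * s.2 u.
Proof.
move=> deg_gt0; rewrite /push /=; under eq_bigr do rewrite ffunE.
rewrite big_split /= sum_adj_const (bigD1 u) //= eqxx [in RHS](bigD1 u) //=.
rewrite (eq_bigr (fun w => s.2 w)) => [|w /negbTE -> //].
have deg_neq0 : (deg adj u)%:R != 0 :> R by rewrite pnatr_eq0 -lt0n.
by case: lazy; field.
Qed.

Lemma push_residual_ge0 (u : T) (s : state R T) : alpha <= 1 ->
  nonneg_residual s -> nonneg_residual (push adj lazy alpha u s).
Proof.
move=> alpha_le1 s_ge0 w; rewrite /push /= ffunE.
have ru_ge0 : 0 <= (1 - alpha) * s.2 u by rewrite mulr_ge0 ?subr_ge0.
apply: addr_ge0; first by case: (w == u); case: lazy; rewrite ?divr_ge0.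
by case: (adj u w); case: lazy; rewrite // divr_ge0 // ?mulr_ge0.
Qed.

Lemma card_support_push (u : T) (s : state R T) :
  (#|Defs.support (push adj lazy alpha u s).1| <= #|Defs.support s.1|.+1)%N.
Proof.
apply: (leq_trans (subset_leq_card (_ : _ \subset u |: Defs.support s.1))).
  apply/subsetP => w; rewrite !inE ffunE.
  by case: (eqVneq w u) => [-> | _] /=; rewrite ?addr0.
by rewrite cardsU1 -add1n leq_add2r leq_b1.
Qed.

Lemma run_residual_ge0 (us : seq T) (s s' : state R T) : alpha <= 1 ->
  nonneg_residual s -> run adj lazy alpha eps s us = Some s' -> nonneg_residual s'.
Proof.
move=> alpha_le1; elim: us s => [|u us IH] s s_ge0 /=; first by case=> <-.
by case: pushable => //; apply/IH/push_residual_ge0.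
Qed.

Lemma run_residual_sum (us : seq T) (s s' : state R T) :
  0 <= alpha -> (forall u, 0 < deg adj u)%N ->
  run adj lazy alpha eps s us = Some s' ->
  mass s' + alpha * eps * (\sum_(u <- us) deg adj u)%N%:R <= mass s.
Proof.
move=> alpha_ge0 deg_gt0; elim: us s => [|u us IH] s /=.
  by case=> <-; rewrite big_nil mulr0 addr0.
case pushable_u: pushable => // /IH.
rewrite push_residual_sum // big_cons natrD.
have : alpha * (eps * (deg adj u)%:R) <= alpha * s.2 u by rewrite ler_wpM2l.
lra.
Qed.

Lemma run_card_support (us : seq T) (s s' : state R T) :
  run adj lazy alpha eps s us = Some s' ->
  (#|Defs.support s'.1| <= #|Defs.support s.1| + size us)%N.
Proof.
elim: us s => [|u us IH] s /=; first by case=> <-; rewrite addn0.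
case: pushable => // /IH /leq_trans -> //.
by rewrite addnS -addSn leq_add2r card_support_push.
Qed.

(* Induction on n with mass s < n alpha eps: since deg u >= 1, a pushable node
   has r_u >= eps, so every push removes at least alpha eps. *)
Lemma exists_complete_run (s : state R T) :
  0 < alpha <= 1 -> 0 < eps -> (forall u, 0 < deg adj u)%N ->
  nonneg_residual s ->
  exists us s', run adj lazy alpha eps s us = Some s' /\ complete adj eps s'.
Proof.
move=> /andP[alpha_gt0 alpha_le1] eps_gt0 deg_gt0 s_ge0.
have step_gt0 : 0 < alpha * eps by rewrite mulr_gt0.
have [n] : exists n : nat, mass s < n%:R * (alpha * eps).
  exists (Num.bound (mass s / (alpha * eps))).
  by rewrite -ltr_pdivrMr // archi_boundP // divr_ge0 ?sumr_ge0 ?ltW.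
elim: n s s_ge0 => [|n IH] s s_ge0 mass_lt.
  by move: mass_lt; rewrite mul0r ltNge sumr_ge0.
have [/existsP[u pushable_u] | /existsPn stuck] :=
  boolP [exists u, pushable adj eps s u]; last by exists [::], s.
have push_lt : mass (push adj lazy alpha u s) < n%:R * (alpha * eps).
  rewrite push_residual_sum //.
  have eps_le_ru : eps <= s.2 u.
    by apply: le_trans pushable_u; rewrite ler_peMr ?(ltW eps_gt0) ?ler1n.
  have : alpha * eps <= alpha * s.2 u by rewrite ler_pM2l.
  move: mass_lt; rewrite -natr1; lra.
have [us [s' [run_us complete_s']]] :=
  IH _ (push_residual_ge0 u alpha_le1 s_ge0) push_lt.
by exists (u :: us), s'; rewrite /= pushable_u.
Qed.

End PushAnalysis.

Section FromInitialState.
Variables (R : realType) (T : finType) (adj : rel T) (v : T).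

Lemma init_residual_ge0 (w : T) : 0 <= (init_state R v).2 w.
Proof. by rewrite ffunE ler0n. Qed.

Lemma init_residual_sum : \sum_w (init_state R v).2 w = 1.
Proof.
rewrite (bigD1 v) //= ffunE eqxx big1 ?addr0 // => w /negbTE w_neq_v.
by rewrite ffunE w_neq_v.
Qed.

Lemma support_init : Defs.support (init_state R v).1 = set0.
Proof. by apply/setP => w; rewrite !inE ffunE eqxx. Qed.

Lemma instant_embedding_cost_run (lazy : bool) (alpha eps : R) (d : nat)
    (us : seq T) (s : state R T) :
  (forall u, 0 < deg adj u)%N ->
  run adj lazy alpha eps (init_state R v) us = Some s ->
  (instant_embedding_cost adj d us s.1 <= 1 + 3 * \sum_(u <- us) deg adj u + d)%N.
Proof.
move=> deg_gt0 /run_card_support; rewrite support_init cards0 add0n => supp_le.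
have size_le : (size us <= \sum_(u <- us) deg adj u)%N.
  by rewrite -sum1_size leq_sum.
rewrite /instant_embedding_cost /sparse_ppr_cost big_split /= sum1_size.
lia.
Qed.

Lemma sum_deg_run_le (lazy : bool) (alpha eps : R) (us : seq T) (s : state R T) :
  0 < alpha <= 1 -> (forall u, 0 < deg adj u)%N ->
  run adj lazy alpha eps (init_state R v) us = Some s ->
  alpha * eps * (\sum_(u <- us) deg adj u)%N%:R <= 1.
Proof.
move=> /andP[alpha_gt0 alpha_le1] deg_gt0 run_us.
have := run_residual_sum (ltW alpha_gt0) deg_gt0 run_us.
have mass_ge0 : 0 <= \sum_w s.2 w.
  apply: sumr_ge0 => w _; apply: run_residual_ge0 run_us w => //.
  exact: init_residual_ge0.
rewrite init_residual_sum; lra.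
Qed.

End FromInitialState.

Theorem theorem1 :
  exists C : nat,
  forall (R : realType) (T : finType) (adj : rel T),
    symmetric adj -> irreflexive adj ->
    (forall u : T, (0 < deg adj u)%N) ->
  forall (v : T) (d : nat), (1 <= d)%N ->
  forall (alpha eps : R), 0 < alpha < 1 -> 0 < eps ->
  forall lazy : bool,
    (exists (us : seq T) (s : state R T),
        run adj lazy alpha eps (init_state R v) us = Some s /\ complete adj eps s) /\
    (forall (us : seq T) (s : state R T),
        run adj lazy alpha eps (init_state R v) us = Some s ->
        ((instant_embedding_cost adj d us s.1)%:R : R)
          <= C%:R * (d%:R + 1 / (alpha * (1 - alpha) * eps))).
Proof.
exists 4%N => R T adj _ _ deg_gt0 v d d_ge1 alpha eps /andP[alpha_gt0 alpha_lt1]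
  eps_gt0 lazy.
have alpha_in : 0 < alpha <= 1 by rewrite alpha_gt0 ltW.
split; first exact: exists_complete_run (@init_residual_ge0 R T v).
move=> us s run_us; set D := (\sum_(u <- us) deg adj u)%N.
apply: (le_trans (y := (1 + 3 * D + d)%N%:R)).
  by rewrite ler_nat (instant_embedding_cost_run d deg_gt0 run_us).
have := sum_deg_run_le alpha_in deg_gt0 run_us; rewrite -/D => sum_deg_le.
(* The proof gives D <= 1/(alpha eps); the factor 1 - alpha < 1 is slack. *)
have D_le : D%:R <= 1 / (alpha * (1 - alpha) * eps).
  rewrite ler_pdivlMr ?mulr_gt0 ?subr_gt0 //.
  have : 0 <= alpha * eps * D%:R * alpha by rewrite !mulr_ge0 ?ler0n ?ltW.
  lra.
have D_ge0 : 0 <= D%:R :> R := ler0n _ _.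
have d_ge1R : 1 <= d%:R :> R by rewrite ler1n.
(* lra is far faster once the reciprocal is abstracted. *)
move: (1 / _) D_le => X D_le.
rewrite !natrD; lra.
Qed.
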